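(* Let $H=K_{K_{1,3},K_{1,4}}$ be the join of a star with $3$ leaves and a star with $4$ leaves. Then every proper edge-colouring of $H$ contains a rainbow copy of $K_4$.
   Context: For vertex-disjoint graphs $L,R$, the join $K_{L,R}$ has vertex set $V(L)\cup V(R)$ and edge set $E(L)\cup E(R)\cup\{uv: u\in V(L), v\in V(R)\}$. A subgraph is rainbow under an edge-colouring if all its edges receive distinct colours. *)

From mathcomp Require Import all_boot.
Set Implicit Arguments. Unset Strict Implicit. Unset Printing Implicit Defensive.

Definition star_adj (k : nat) : rel 'I_k.+1 :=
  fun i j => (i == ord0) != (j == ord0).

Definition join_adj (L R : finType) (eL : rel L) (eR : rel R) : rel (L + R) :=
  fun u v => match u, v with
             | inl x, inl y => eL x y
             | inr x, inr y => eR x y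
             | _, _ => true
             end.

Definition Hvert : finType := ('I_4 + 'I_5)%type.
Definition Hadj : rel Hvert := join_adj (@star_adj 3) (@star_adj 4).

(* An edge-colouring of a graph (V, e) with colours in C is a function on
   vertex pairs that is symmetric on edges (values off edges are irrelevant). *)
Definition edge_colouring (V : finType) (e : rel V) (C : Type) (c : V -> V -> C) :=
  forall x y, e x y -> c x y = c y x.

Definition proper_colouring (V : finType) (e : rel V) (C : Type) (c : V -> V -> C) :=
  edge_colouring e c /\
  forall x y z, e x y -> e x z -> y != z -> c x y <> c x z.

Definition has_rainbow_K4 (V : finType) (e : rel V) (C : Type) (c : V -> V -> C) :=
  exists f : 'I_4 -> V,
    injective f /\
    (forall i j, i != j -> e (f i) (f j)) /\
    (forall i j k l : 'I_4, i < j -> k < l -> (i, j) != (k, l) ->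
        c (f i) (f j) <> c (f k) (f l)).

From mathcomp Require Import all_boot.
From Stdlib Require Import Classical IndefiniteDescription.

Set Implicit Arguments.
Unset Strict Implicit.

(* Write a0 for the centre and a1 for a leaf of K_{1,3}, b0 for
   the centre of K_{1,4} and b1..b4 for its leaves.  For every leaf b_k the
   vertices a0 a1 b0 b_k span a K_4 of H.  In a proper colouring two edges
   of a K_4 that share a vertex always differ, so such a K_4 is rainbow
   unless one of its three perfect matchings
     {a0a1, b0b_k},  {a0b0, a1b_k},  {a0b_k, a1b0}
   is monochromatic.  A monochromatic matching of a given type determines
   b_k: two leaves with the same type would give equal colours on two edges
   at b0, at a1 or at a0 respectively.  With four leaves and only three
   types, pigeonhole yields a leaf none of whose matchings is monochromatic,
   hence a rainbow K_4. *)

(* Pigeonhole: if each of [n < m] types is carried by at most one of [m]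
   objects, some object carries no type.  (Classical: types are arbitrary
   propositions, so a typing function is obtained by choice.) *)
Lemma pigeonhole_rel (m n : nat) (P : 'I_n -> 'I_m -> Prop) :
  n < m -> (forall t k k', P t k -> P t k' -> k = k') ->
  exists k, forall t, ~ P t k.
Proof.
move=> ltnm uniqP; apply: NNPP => noFree.
have typed k : exists t, P t k.
  by apply: NNPP => noType; apply: noFree; exists k => t Ptk; apply: noType; exists t.
pose type k := proj1_sig (constructive_indefinite_description _ (typed k)).
have typeP k : P (type k) k := proj2_sig (constructive_indefinite_description _ (typed k)).
have type_inj : injective type.
  by move=> k k' eqt; apply: (uniqP (type k)) => //; rewrite eqt.
by move: (leq_card type type_inj); rewrite !card_ord leqNgt ltnm.
Qed.

Section RainbowK4.

Variable C : Type.

Lemma K4_rainbow_criterion (d : nat -> nat -> C) :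
  (forall i j, i < 4 -> j < 4 -> i != j -> d i j = d j i) ->
  (forall i j k, i < 4 -> j < 4 -> k < 4 ->
     j != i -> k != i -> j != k -> d i j <> d i k) ->
  d 0 1 <> d 2 3 -> d 0 2 <> d 1 3 -> d 0 3 <> d 1 2 ->
  forall i j k l, j < 4 -> i < j -> l < 4 -> k < l -> (i, j) != (k, l) -> d i j <> d k l.
Proof.
move=> dsym dinc m1 m2 m3.
have shared a b a' b' : [|| a == a', a == b', b == a' | b == b'] ->
    a < 4 -> b < 4 -> a' < 4 -> b' < 4 -> a != b -> a' != b' ->
    (a, b) != (a', b') -> (a, b) != (b', a') -> d a b <> d a' b'.
  case/or4P=> /eqP <- ha hb ha' hb' nab nab';
    rewrite !xpair_eqE ?eqxx ?andbT ?andTb => n1 n2.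
  - by apply: dinc; rewrite // eq_sym.
  - by rewrite (dsym a' a) //; apply: dinc; rewrite // eq_sym.
  - by rewrite (dsym a b) //; apply: dinc; rewrite // eq_sym.
  - by rewrite (dsym a b) // (dsym a' b) //; apply: dinc; rewrite // eq_sym.
do 4!case=> [|[|[|[|?]]]]; move=> //= _ _ _ _ _;
  first [ exact: m1 | exact: m2 | exact: m3 | exact: nesym m1 | exact: nesym m2
        | exact: nesym m3 | exact: shared ].
Qed.

Variables (V : finType) (e : rel V) (c : V -> V -> C).

Lemma rainbow_K4_of_matchings (w x y z : V) :
  proper_colouring e c -> uniq [:: w; x; y; z] ->
  {in [:: w; x; y; z] &, forall u v, u != v -> e u v} ->
  c w x <> c y z -> c w y <> c x z -> c w z <> c x y ->
  has_rainbow_K4 e c.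
Proof.
set s := [:: w; x; y; z] => -[csym cprop] uniq_s complete m1 m2 m3.
have nth_eq i j : i < 4 -> j < 4 -> (nth w s i == nth w s j) = (i == j).
  by move=> hi hj; rewrite nth_uniq.
have adj i j : i < 4 -> j < 4 -> i != j -> e (nth w s i) (nth w s j).
  by move=> hi hj nij; apply: complete; rewrite ?mem_nth ?nth_eq.
exists (fun i : 'I_4 => nth w s i); split; [|split].
- by move=> i j /eqP; rewrite nth_eq // => /eqP /val_inj.
- by move=> i j nij; apply: adj.
pose d i j := c (nth w s i) (nth w s j).
have dsym i j : i < 4 -> j < 4 -> i != j -> d i j = d j i.
  by move=> hi hj nij; apply: csym; apply: adj.
have dinc i j k : i < 4 -> j < 4 -> k < 4 -> j != i -> k != i -> j != k -> d i j <> d i k.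
  by move=> hi hj hk nji nki njk; apply: cprop; rewrite ?adj ?nth_eq // eq_sym.
move=> i j k l lt_ij lt_kl nijkl.
exact: (K4_rainbow_criterion dsym dinc m1 m2 m3 (ltn_ord j) lt_ij (ltn_ord l) lt_kl nijkl).
Qed.

End RainbowK4.

Definition a0 : Hvert := inl ord0.
Definition a1 : Hvert := inl ord_max.
Definition b0 : Hvert := inr ord0.
Definition leaf (k : 'I_4) : Hvert := inr (lift ord0 k).

Lemma leaf_inj : injective leaf.
Proof. by move=> k k' [] /val_inj. Qed.

Lemma K4_at_leaf (k : 'I_4) :
  uniq [:: a0; a1; b0; leaf k] /\
  {in [:: a0; a1; b0; leaf k] &, forall u v, u != v -> Hadj u v}.
Proof.
split=> // u v; rewrite !inE.
by move=> /or4P[] /eqP-> /or4P[] /eqP->; rewrite ?eqxx.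
Qed.

Definition mono_matching (C : Type) (c : Hvert -> Hvert -> C) (t : 'I_3) (k : 'I_4) : Prop :=
  match val t with
  | 0 => c a0 a1 = c b0 (leaf k)
  | 1 => c a0 b0 = c a1 (leaf k)
  | _ => c a0 (leaf k) = c a1 b0
  end.

(* In a proper colouring a monochromatic matching type occurs at one leaf only:
   otherwise two edges at b0, a1 or a0 would share a colour. *)
Lemma mono_matching_unique (C : Type) (c : Hvert -> Hvert -> C) :
  proper_colouring Hadj c ->
  forall t k k', mono_matching c t k -> mono_matching c t k' -> k = k'.
Proof.
move=> [_ cprop] t k k'; case: (eqVneq k k') => // nkk'.
have nleaf : leaf k != leaf k' by rewrite (inj_eq leaf_inj).
rewrite /mono_matching; case: t => [[|[|t]] ?] /= E E'; exfalso.
- exact: (cprop b0 (leaf k) (leaf k') isT isT nleaf (etrans (esym E) E')).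
- exact: (cprop a1 (leaf k) (leaf k') isT isT nleaf (etrans (esym E) E')).
- exact: (cprop a0 (leaf k) (leaf k') isT isT nleaf (etrans E (esym E'))).
Qed.

Theorem mainTheorem6 (C : Type) (c : Hvert -> Hvert -> C) :
  proper_colouring Hadj c -> has_rainbow_K4 Hadj c.
Proof.
move=> cproper.
have [k free] := pigeonhole_rel (ltnSn 3) (mono_matching_unique cproper).
have [uniq_k complete_k] := K4_at_leaf k.
apply: (rainbow_K4_of_matchings cproper uniq_k complete_k).
- exact: (free (@Ordinal 3 0 isT)).
- exact: (free (@Ordinal 3 1 isT)).
- exact: (free (@Ordinal 3 2 isT)).
Qed.
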